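(* Let $B=A_P[y_1,y_2;\sigma,\delta,\tau]$ be a right double extension of a $K$-algebra $A$, let $k,l\in K$ and $0\neq z=ky_1+ly_2\in B$. Then $zA\subseteq Az+A$ if and only if $kl\sigma_{11}+l^2\sigma_{21}=kl\sigma_{22}+k^2\sigma_{12}$.
   Context: $K$ is a field. Let $A$ be a subalgebra of a $K$-algebra $B$. $B$ is a right double extension of $A$ if: (i) $B$ is generated by $A$ and $y_1,y_2$; (ii) $y_2y_1=p_{12}y_1y_2+p_{11}y_1^2+\tau_1y_1+\tau_2y_2+\tau_0$ for some $p_{12},p_{11}\in K$, $\tau_0,\tau_1,\tau_2\in A$; (iii) $B$ is a free left $A$-module with basis $\{y_1^iy_2^j:i,j\ge0\}$; (iv) $y_1A+y_2A+A\subseteq Ay_1+Ay_2+A$, i.e. there are ($K$-linear) maps $\sigma_{ij},\delta_i\colon A\to A$ ($i,j=1,2$) with $y_1a=\sigma_{11}(a)y_1+\sigma_{12}(a)y_2+\delta_1(a)$ and $y_2a=\sigma_{21}(a)y_1+\sigma_{22}(a)y_2+\delta_2(a)$ for all $a\in A$. One writes $B=A_P[y_1,y_2;\sigma,\delta,\tau]$ with $\sigma=(\sigma_{ij})$, $\delta=(\delta_1,\delta_2)^T$, $P=\{p_{12},p_{11}\}$, $\tau=\{\tau_0,\tau_1,\tau_2\}$. *)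

From HB Require Import structures.
From mathcomp Require Import all_boot all_order all_algebra.
Set Implicit Arguments. Unset Strict Implicit. Unset Printing Implicit Defensive.
Import GRing.Theory.
Local Open Scope ring_scope.

Definition is_subalgebra (K : fieldType) (B : algType K) (A : B -> Prop) : Prop :=
  [/\ A 1,
      (forall a b, A a -> A b -> A (a + b)),
      (forall (c : K) a, A a -> A (c *: a)) &
      (forall a b, A a -> A b -> A (a * b))].

Definition generated_by (K : fieldType) (B : algType K) (A : B -> Prop)
  (y1 y2 : B) : Prop :=
  forall S : B -> Prop, is_subalgebra S -> (forall a, A a -> S a) ->
    S y1 -> S y2 -> forall b, S b.

Definition free_left_basis (K : fieldType) (B : algType K) (A : B -> Prop)
  (y1 y2 : B) : Prop :=
  (forall b : B, exists (n : nat) (c : nat -> nat -> B),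
      (forall i j, A (c i j)) /\
      b = \sum_(i < n) \sum_(j < n) c i j * (y1 ^+ i * y2 ^+ j)) /\
  (forall (n : nat) (c : nat -> nat -> B),
      (forall i j, A (c i j)) ->
      \sum_(i < n) \sum_(j < n) c i j * (y1 ^+ i * y2 ^+ j) = 0 ->
      forall i j, (i < n)%N -> (j < n)%N -> c i j = 0).

Definition right_double_extension (K : fieldType) (B : algType K)
  (A : B -> Prop) (y1 y2 : B) (p12 p11 : K) (tau0 tau1 tau2 : B)
  (s11 s12 s21 s22 d1 d2 : B -> B) : Prop :=
  [/\ is_subalgebra A,
      generated_by A y1 y2,
      [/\ A tau0, A tau1, A tau2 &
          y2 * y1 = p12 *: (y1 * y2) + p11 *: (y1 ^+ 2)
                    + tau1 * y1 + tau2 * y2 + tau0],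
      free_left_basis A y1 y2 &
      forall a, A a ->
        [/\ A (s11 a), A (s12 a), A (s21 a) & A (s22 a)] /\
        A (d1 a) /\ A (d2 a) /\
        y1 * a = s11 a * y1 + s12 a * y2 + d1 a /\
        y2 * a = s21 a * y1 + s22 a * y2 + d2 a].

From HB Require Import structures.
From mathcomp Require Import all_boot all_order all_algebra.
Import GRing.Theory.
Set Implicit Arguments. Unset Strict Implicit. Unset Printing Implicit Defensive.
Local Open Scope ring_scope.

(* Writing z = k y1 + l y2, condition (iv) gives
   z a = (k s11 a + l s21 a) y1 + (k s12 a + l s22 a) y2 + (k d1 a + l d2 a),
   while a' z + a'' = (k a') y1 + (l a') y2 + a''.  By freeness of the basis
   {y1^i y2^j}, z a lies in A z + A exactly when the two A-coefficients of
   y1, y2 in z a are k w and l w for a common w in A; as (k, l) <> (0, 0),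
   this happens iff  l (k s11 a + l s21 a) = k (k s12 a + l s22 a). *)

Section Subalgebra.
Variables (K : fieldType) (B : algType K) (A : B -> Prop).
Hypothesis subA : is_subalgebra A.

Lemma subalgD a b : A a -> A b -> A (a + b).
Proof. by case: subA => _ AD _ _; apply: AD. Qed.

Lemma subalgZ (c : K) a : A a -> A (c *: a).
Proof. by case: subA => _ _ AZ _; apply: AZ. Qed.

Lemma subalg0 : A 0.
Proof. by rewrite -(scale0r 1); apply: subalgZ; case: subA. Qed.

Lemma subalgB a b : A a -> A b -> A (a - b).
Proof. by move=> Aa Ab; rewrite -scaleN1r; apply/subalgD/subalgZ. Qed.

Variables y1 y2 : B.
Hypothesis freeA : free_left_basis A y1 y2.

Lemma free_left_basis_deg1_eq0 u1 u2 u0 : A u1 -> A u2 -> A u0 ->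
  u1 * y1 + u2 * y2 + u0 = 0 -> [/\ u1 = 0, u2 = 0 & u0 = 0].
Proof.
move=> Au1 Au2 Au0 Eu; have [_ indep] := freeA.
pose c (i j : nat) : B :=
  if (i, j) == (1, 0)%N then u1 else if (i, j) == (0, 1)%N then u2
  else if (i, j) == (0, 0)%N then u0 else 0.
have Ac i j : A (c i j).
  by rewrite /c; do 3 case: ifP => _ //; exact: subalg0.
have c_sum : \sum_(i < 2) \sum_(j < 2) c i j * (y1 ^+ i * y2 ^+ j) = 0.
  rewrite !big_ord_recr !big_ord0 /= /c /= !expr0 !expr1 !mul0r !mulr1 !mul1r.
  by rewrite !add0r !addr0 -Eu [LHS]addrC [u0 + _]addrC addrA.
by split; [exact: (indep _ c Ac c_sum 1%N 0%N) | exact: (indep _ c Ac c_sum 0%N 1%N)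
         | exact: (indep _ c Ac c_sum 0%N 0%N)].
Qed.

Lemma free_left_basis_deg1_inj a1 a2 a0 b1 b2 b0 :
  A a1 -> A a2 -> A a0 -> A b1 -> A b2 -> A b0 ->
  a1 * y1 + a2 * y2 + a0 = b1 * y1 + b2 * y2 + b0 ->
  [/\ a1 = b1, a2 = b2 & a0 = b0].
Proof.
move=> Aa1 Aa2 Aa0 Ab1 Ab2 Ab0 /eqP; rewrite -subr_eq0 => /eqP E.
have [] := @free_left_basis_deg1_eq0 (a1 - b1) (a2 - b2) (a0 - b0).
- exact: subalgB.
- exact: subalgB.
- exact: subalgB.
- by rewrite -E !mulrBl !opprD [RHS]addrACA (addrACA (a1 * y1)).
by move=> /subr0_eq -> /subr0_eq -> /subr0_eq ->.
Qed.

End Subalgebra.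

Lemma mul_linear_comb (K : fieldType) (B : algType K) (k l : K)
    (y1 y2 a s11 s12 s21 s22 d1 d2 : B) :
  y1 * a = s11 * y1 + s12 * y2 + d1 -> y2 * a = s21 * y1 + s22 * y2 + d2 ->
  (k *: y1 + l *: y2) * a =
    (k *: s11 + l *: s21) * y1 + (k *: s12 + l *: s22) * y2 + (k *: d1 + l *: d2).
Proof.
move=> E1 E2; rewrite mulrDl -!scalerAl E1 E2 !scalerDr !scalerAl !mulrDl.
by rewrite [LHS]addrACA [in LHS](addrACA (k *: s11 * y1)).
Qed.

Lemma scale_common_factor (K : fieldType) (V : lmodType K) (k l : K) (u v : V) :
  (k != 0) || (l != 0) -> l *: u = k *: v ->
  let w := if k != 0 then k^-1 *: u else l^-1 *: v in u = k *: w /\ v = l *: w.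
Proof.
move=> kl_neq0 E w; rewrite /w; have [k0 | kn0] := eqVneq k 0; last first.
  rewrite !scalerA divff // scale1r; split=> //.
  by apply: (scalerI kn0); rewrite -E !scalerA mulrCA divff // mulr1.
have ln0 : l != 0 by rewrite k0 eqxx in kl_neq0.
move: E; rewrite k0 scale0r => /eqP; rewrite scaler_eq0 (negbTE ln0) /= => /eqP ->.
by rewrite scale0r scalerA divff // scale1r.
Qed.

Theorem lemma2p3 (K : fieldType) (B : algType K) (A : B -> Prop) (y1 y2 : B)
  (p12 p11 : K) (tau0 tau1 tau2 : B) (s11 s12 s21 s22 d1 d2 : B -> B)
  (k l : K) :
  right_double_extension A y1 y2 p12 p11 tau0 tau1 tau2 s11 s12 s21 s22 d1 d2 ->
  k *: y1 + l *: y2 != 0 ->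
  (forall a, A a -> exists a' a'', A a' /\ A a'' /\
       (k *: y1 + l *: y2) * a = a' * (k *: y1 + l *: y2) + a'')
  <->
  (forall a, A a ->
     (k * l) *: s11 a + (l ^+ 2) *: s21 a = (k * l) *: s22 a + (k ^+ 2) *: s12 a).
Proof.
move=> [subA _ _ freeA sigma_delta] z_neq0.
have kl_neq0 : (k != 0) || (l != 0).
  by apply: contraNT z_neq0; rewrite negb_or !negbK => /andP[/eqP-> /eqP->];
     rewrite !scale0r addr0.
pose u a := k *: s11 a + l *: s21 a; pose v a := k *: s12 a + l *: s22 a.
have condE a : (k * l) *: s11 a + (l ^+ 2) *: s21 a = (k * l) *: s22 a + (k ^+ 2) *: s12 a
    <-> l *: u a = k *: v a.
  by rewrite /u /v !scalerDr !scalerA [l * k]mulrC [(k * k) *: _ + _]addrC !expr2.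
have AZD x y : A x -> A y -> A (k *: x + l *: y).
  by move=> Ax Ay; apply: (subalgD subA); apply: (subalgZ subA).
split=> [zA a Aa | cond a Aa];
  have [[As11 As12 As21 As22] [Ad1 [Ad2 [E1 E2]]]] := sigma_delta a Aa;
  have zaE := mul_linear_comb k l E1 E2.
- apply/condE; have [a' [a'' [Aa' [Aa'' E]]]] := zA a Aa.
  move: E; rewrite zaE mulrDr -!scalerAr !scalerAl => E.
  have [uE vE _] := free_left_basis_deg1_inj subA freeA (AZD _ _ As11 As21)
    (AZD _ _ As12 As22) (AZD _ _ Ad1 Ad2) (subalgZ subA k Aa')
    (subalgZ subA l Aa') Aa'' E.
  by rewrite /u /v uE vE !scalerA mulrC.
- have /condE/(scale_common_factor kl_neq0) [uE vE] := cond a Aa.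
  set w := (if k != 0 then _ else _) in uE vE.
  exists w, (k *: d1 a + l *: d2 a); split; last split; last first.
  + by rewrite zaE -/(u a) -/(v a) uE vE mulrDr -!scalerAr !scalerAl.
  + exact: AZD.
  + by rewrite /w; case: ifP => _; apply/(subalgZ subA)/AZD.
Qed.
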